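(* Let $\Gamma$ be a positive recursive absorbing game with payoffs in $(0,1]$, let $x\in X$ be a nonabsorbing mixed action profile and $i\in I$. Then $v_i\le\max\{0,\rho_i(x)\}$. In particular, if $\rho_i(x)=-\infty$ then $v_i=0$, and if $\rho_i(x)>-\infty$ then $\rho_i(x)\ge v_i$.
   Context: A positive recursive absorbing game is $\Gamma=(I,(A_i)_{i\in I},(r_i)_{i\in I},p)$ with $I$ finite, $A_i$ finite nonempty, $A=\prod_iA_i$, $r_i:A\to(0,1]$, $p:A\to[0,1]$; at each stage, if not yet absorbed, players choose $a^n\in A$, the game absorbs with probability $p(a^n)$ with terminal payoff $r(a^n)$, and otherwise continues with payoff $0$. Undiscounted payoff: $\gamma(\sigma)=\mathbf E_\sigma[r(a^\theta)\mathbf 1_{\theta<\infty}]$ for behavior strategy profiles $\sigma$, with $\theta$ the absorption stage. Minmax value: $v_i:=\inf_{\sigma_{-i}}\sup_{\sigma_i}\gamma_i(\sigma)$. Let $\Xi_i=\Delta(A_i)$, $\Xi=\prod_i\Xi_i$; for $x\in\Xi$, ${\rm supp}(x)=\prod_i{\rm supp}(x_i)$, $p(x)=\sum_{a\in A}p(a)\prod_jx_j(a_j)$, and when $p(x)>0$, $r_i(x)=\sum_a r_i(a)p(a)\prod_jx_j(a_j)/p(x)$. Let $B=\{a\in A:p(a)=0\}$, and let $X$ be the set of $x\in\Xi$ whose support is contained in a single connected component of the graph on $B$ where two profiles are adjacent iff they differ in exactly one player's action (equivalently, $X=\{x\in\Xi:p(x)=0\}$). Define $\rho_i(x):=\max\{r_i(a_i,x_{-i}):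 a_i\in A_i,\ p(a_i,x_{-i})>0\}$, with the convention $\max\emptyset=-\infty$. *)

From HB Require Import structures.
From mathcomp Require Import all_boot all_order all_algebra.
From mathcomp Require Import all_classical all_reals all_analysis.
Unset Printing Implicit Defensive.
Import Order.TTheory GRing.Theory Num.Theory.
Import numFieldTopology.Exports numFieldNormedType.Exports.
Local Open Scope ring_scope.

Section AbsorbingGame.
Variables (R : realType) (I : finType) (A : I -> finType).

Definition prof := {dffun forall i : I, A i}.

Definition is_mixed (i : I) (y : {ffun A i -> R}) : Prop :=
  (forall ai, 0 <= y ai) /\ \sum_(ai : A i) y ai = 1.

Definition mprof := forall i : I, {ffun A i -> R}.
Definition is_mprof (x : mprof) : Prop := forall i, is_mixed i (x i).

Definition mprob (x : mprof) (a : prof) : R := \prod_(j : I) x j (a j).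

Definition pmix (p : prof -> R) (x : mprof) : R :=
  \sum_(a : prof) p a * mprob x a.

Definition pdev (p : prof -> R) (x : mprof) (i : I) (ai : A i) : R :=
  \sum_(a : prof | a i == ai) p a * \prod_(j : I | j != i) x j (a j).

Definition rdev (r : I -> prof -> R) (p : prof -> R) (x : mprof)
    (i : I) (ai : A i) : R :=
  (\sum_(a : prof | a i == ai) r i a * p a * \prod_(j : I | j != i) x j (a j))
  / pdev p x i ai.

Definition rho (r : I -> prof -> R) (p : prof -> R) (x : mprof) (i : I)
    : \bar R :=
  \big[Order.max/-oo%E]_(ai : A i | 0 < pdev p x i ai) (rdev r p x i ai)%:E.

(* Behavior strategy profiles: player i's mixed action at stage n depends on
   the history h of the (non-absorbing) action profiles played so far. *)
Definition strat := forall i : I, seq prof -> {ffun A i -> R}.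
Definition is_strat (s : strat) : Prop := forall i h, is_mixed i (s i h).

Definition sprob (s : strat) (h : seq prof) (a : prof) : R :=
  \prod_(j : I) s j h (a j).

(* probability that the play starts with past ++ fut without absorption,
   given that past has already occurred *)
Fixpoint hw_aux (p : prof -> R) (s : strat) (past fut : seq prof) : R :=
  match fut with
  | [::] => 1
  | a :: f => sprob s past a * (1 - p a) * hw_aux p s (rcons past a) f
  end.

Definition hweight (p : prof -> R) (s : strat) (h : seq prof) : R :=
  hw_aux p s [::] h.

(* expected absorbing payoff of player i received at stage n+1
   (i.e. E[r_i(a^theta) 1_{theta = n+1}]) *)
Definition stage_payoff (r : I -> prof -> R) (p : prof -> R) (s : strat)
    (i : I) (n : nat) : R :=
  \sum_(h : n.-tuple prof)
     hweight p s h * \sum_(a : prof) sprob s h a * p a * r i a.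

(* undiscounted payoff gamma_i(s) = E_s[ r_i(a^theta) 1_{theta < oo} ]
   = sum over n of the stage payoffs (a series of nonnegative terms) *)
Definition gamma (r : I -> prof -> R) (p : prof -> R) (s : strat) (i : I) : R :=
  limn ((series (stage_payoff r p s i)) : nat -> R).

Definition minmax (r : I -> prof -> R) (p : prof -> R) (i : I) : R :=
  inf [set inf_val | exists s : strat, is_strat s /\
    inf_val = sup [set gamma r p t i | t in
      [set t : strat | is_strat t /\ forall j, j != i -> t j = s j]]].

End AbsorbingGame.

Arguments prof {I} A.
Arguments is_mixed {R I A i} y.
Arguments mprof R {I} A.
Arguments is_mprof {R I A} x.
Arguments mprob {R I A} x a.
Arguments pmix {R I A} p x.
Arguments pdev {R I A} p x i ai.
Arguments rdev {R I A} r p x i ai.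
Arguments rho {R I A} r p x i.
Arguments strat R {I} A.
Arguments is_strat {R I A} s.
Arguments sprob {R I A} s h a.
Arguments hw_aux {R I A} p s past fut.
Arguments hweight {R I A} p s h.
Arguments stage_payoff {R I A} r p s i n.
Arguments gamma {R I A} r p s i.
Arguments minmax {R I A} r p i.

From HB Require Import structures.
From mathcomp Require Import all_boot all_order all_algebra.
From mathcomp Require Import all_classical all_reals all_analysis.
From mathcomp Require Import ring.
Import Order.TTheory GRing.Theory Num.Theory.
Set Implicit Arguments.
Unset Strict Implicit.
Local Open Scope ring_scope.

(* Once the opponents of player i play the mixed profile x_{-i} at every stage,
   whatever i does at a stage, the expected absorbing payoff of that stage is at
   most M := max(0, rho_i(x)) times its absorption probability.  Summing over
   stages, the payoff received up to any stage N is at most M times the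
   probability of absorption before N, hence at most M; so the stationary
   punishment x_{-i} holds player i down to M. *)

Lemma sum_prof_prod (R : comPzSemiRingType) (I : finType) (A : I -> finType)
    (f : forall i, {ffun A i -> R}) :
  \sum_(a : prof A) \prod_(j : I) f j (a j) = \prod_(j : I) \sum_(b : A j) f j b.
Proof.
rewrite (reindex (@dffun_of_fprod I A)); last first.
  by apply: onW_bij; exact: dffun_of_fprod_bij.
under eq_bigr => t _ do under eq_bigr => j _ do rewrite ffunE.
rewrite (eq_bigl (fun t => predT (fprod_fun t))) //.
rewrite (big_fprod_dep 1 _ (fun j => f j)) big_mkcondr /=.
rewrite -(bigA_distr_big_dep (fun j => tagged_with A j) (fun j u => untag 0 (f j) u)).
by apply: eq_bigr => j _; rewrite (big_tag (fun j => f j)) big_mkcond.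
Qed.

Section Strategies.
Variables (R : realType) (I : finType) (A : I -> finType).
Implicit Types (s : strat R A) (a : prof A) (h : seq (prof A)).

Definition shift_strat (s : strat R A) (a : prof A) : strat R A :=
  fun j h => s j (a :: h).

Lemma is_strat_shift s a : is_strat s -> is_strat (shift_strat s a).
Proof. by move=> hs j h; exact: hs. Qed.

Lemma sprob_ge0 s h a : is_strat s -> 0 <= sprob s h a.
Proof. by move=> hs; apply: prodr_ge0 => j _; case: (hs j h). Qed.

Lemma sprob_sum1 s h : is_strat s -> \sum_a sprob s h a = 1.
Proof.
move=> hs; rewrite /sprob (sum_prof_prod (fun j => s j h)).
by apply: big1 => j _; case: (hs j h).
Qed.

Variable p : prof A -> R.
Hypothesis p01 : forall a, 0 <= p a <= 1.

Lemma hw_aux_shift s a past f :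
  hw_aux p s (a :: past) f = hw_aux p (shift_strat s a) past f.
Proof. by elim: f past => [//|b f IH] past /=; rewrite IH. Qed.

Lemma hw_aux_ge0 s past f : is_strat s -> 0 <= hw_aux p s past f.
Proof.
move=> hs; elim: f past => [|b f IH] past /=; first exact: ler01.
rewrite mulr_ge0 ?IH // mulr_ge0 ?sprob_ge0 // subr_ge0.
by case/andP: (p01 b).
Qed.

Variables (r : I -> prof A -> R) (i : I).
Hypothesis r01 : forall a, 0 <= r i a <= 1.

Lemma stage_payoff0 s :
  stage_payoff r p s i 0 = \sum_a sprob s [::] a * p a * r i a.
Proof.
rewrite /stage_payoff (big_pred1 [tuple]); last first.
  by move=> t; rewrite /= [t]tuple0; apply/esym/eqP.
by rewrite /hweight /= mul1r.
Qed.

(* The first stage either absorbs or is replayed by the shifted strategy. *)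
Lemma stage_payoffS s n :
  stage_payoff r p s i n.+1 =
  \sum_a sprob s [::] a * (1 - p a) * stage_payoff r p (shift_strat s a) i n.
Proof.
rewrite /stage_payoff.
rewrite (reindex (fun u : prof A * n.-tuple (prof A) => [tuple of u.1 :: u.2])); last first.
  exists (fun t => (thead t, [tuple of behead t])).
    by move=> [a t] _ /=; congr pair; apply: val_inj.
  by move=> t _; rewrite [in RHS](tuple_eta t).
rewrite -(pair_bigA _ (fun (a : prof A) (t : n.-tuple (prof A)) =>
  hweight p s [tuple of a :: t] *
  \sum_(b : prof A) sprob s [tuple of a :: t] b * p b * r i b)) /=.
apply: eq_bigr => a _; rewrite big_distrr /=.
by apply: eq_bigr => t _; rewrite /hweight /= hw_aux_shift !mulrA.
Qed.

Lemma stage_payoff_ge0 s n : is_strat s -> 0 <= stage_payoff r p s i n.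
Proof.
move=> hs; apply: sumr_ge0 => h _; rewrite mulr_ge0 ?hw_aux_ge0 //.
apply: sumr_ge0 => a _; case/andP: (p01 a) => p0 _; case/andP: (r01 a) => r0 _.
by rewrite !mulr_ge0 ?sprob_ge0.
Qed.

Lemma sum_stage_payoff_le (C : strat R A -> Prop) (M : R) :
  0 <= M -> (forall s, C s -> is_strat s) ->
  (forall s a, C s -> C (shift_strat s a)) ->
  (forall s, C s -> \sum_a sprob s [::] a * p a * r i a <=
                    M * \sum_a sprob s [::] a * p a) ->
  forall N s, C s -> \sum_(n < N) stage_payoff r p s i n <= M.
Proof.
move=> M0 Cstrat Cshift Cstage; elim=> [|N IH] s Cs; first by rewrite big_ord0.
have hs := Cstrat _ Cs.
rewrite big_ord_recl /= stage_payoff0.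
under eq_bigr => n _ do rewrite stage_payoffS.
rewrite exchange_big /=.
have -> : M = M * \sum_a sprob s [::] a * p a
              + \sum_a sprob s [::] a * (1 - p a) * M.
  rewrite -mulr_suml [X in _ + X]mulrC -mulrDr -big_split /=.
  under eq_bigr => a _ do rewrite -mulrDr addrC subrK mulr1.
  by rewrite sprob_sum1 // mulr1.
rewrite lerD ?Cstage //; apply: ler_sum => a _; rewrite -big_distrr /=.
apply: ler_wpM2l; last exact: IH (Cshift _ _ Cs).
rewrite mulr_ge0 ?sprob_ge0 // subr_ge0.
by case/andP: (p01 a).
Qed.

Lemma gamma_ge0_le s (M : R) : is_strat s ->
  (forall N, \sum_(n < N) stage_payoff r p s i n <= M) ->
  0 <= gamma r p s i <= M.
Proof.
move=> hs uM; rewrite /gamma.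
set u := stage_payoff r p s i in uM *.
have u0 n : 0 <= u n by exact: stage_payoff_ge0.
have nd : nondecreasing_seq (series u) by exact: (@nondecreasing_series _ u predT 0).
have hub : has_ubound (range (series u)).
  by exists M => _ [n _ <-]; rewrite /series /= big_mkord.
have cv := nondecreasing_is_cvgn nd hub.
apply/andP; split.
  by apply: limr_ge => //; apply: nearW => n; rewrite /series /= sumr_ge0.
by apply: limr_le => //; apply: nearW => n; rewrite /series /= big_mkord.
Qed.

Lemma gamma01 s : is_strat s -> 0 <= gamma r p s i <= 1.
Proof.
move=> hs; apply: gamma_ge0_le => // N.
apply: (@sum_stage_payoff_le (@is_strat R I A)) => //.
- exact: is_strat_shift.
- move=> t ht; rewrite mul1r; apply: ler_sum => a _.
  case/andP: (p01 a) => p0 _; case/andP: (r01 a) => _ r1.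
  by rewrite ler_piMr // mulr_ge0 ?sprob_ge0.
Qed.

End Strategies.

Section StationaryPunishment.
Variables (R : realType) (I : finType) (A : I -> finType).
Variables (r : I -> prof A -> R) (p : prof A -> R) (x : mprof R A) (i : I).
Hypotheses (p01 : forall a, 0 <= p a <= 1) (r01 : forall a, 0 <= r i a <= 1).
Hypothesis hx : is_mprof x.
Implicit Types (s t : strat R A) (a : prof A) (ai : A i).

Definition rdev_num ai : R :=
  \sum_(a : prof A | a i == ai) r i a * p a * \prod_(j : I | j != i) x j (a j).

Lemma rdevE ai : rdev r p x i ai = rdev_num ai / pdev p x i ai.
Proof. by []. Qed.

Lemma prod_others_ge0 a : 0 <= \prod_(j : I | j != i) x j (a j).
Proof. by apply: prodr_ge0 => j _; case: (hx j). Qed.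

Lemma pdev_ge0 ai : 0 <= pdev p x i ai.
Proof.
apply: sumr_ge0 => a _; case/andP: (p01 a) => p0 _.
by rewrite mulr_ge0 ?prod_others_ge0.
Qed.

Lemma rdev_num_ge0 ai : 0 <= rdev_num ai.
Proof.
apply: sumr_ge0 => a _; case/andP: (p01 a) => p0 _; case/andP: (r01 a) => r0 _.
by rewrite !mulr_ge0 ?prod_others_ge0.
Qed.

Lemma rdev_num_le_pdev ai : rdev_num ai <= pdev p x i ai.
Proof.
apply: ler_sum => a _; case/andP: (p01 a) => p0 _; case/andP: (r01 a) => _ r1.
by rewrite -mulrA ler_piMl // mulr_ge0 ?prod_others_ge0.
Qed.

Lemma rho_cases : rho r p x i = -oo%E \/ exists2 y, 0 <= y & rho r p x i = y%:E.
Proof.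
rewrite /rho; apply: (big_ind (fun e : \bar R =>
  e = -oo%E \/ exists2 y, 0 <= y & e = y%:E)); first by left.
  by move=> e1 e2 h1 h2; rewrite maxEle; case: ifP.
move=> ai _; right; exists (rdev r p x i ai) => //.
by rewrite rdevE divr_ge0 ?rdev_num_ge0 ?pdev_ge0.
Qed.

Lemma rdev_num_le_scaled (M : R) : 0 <= M -> (rho r p x i <= M%:E)%E ->
  forall ai, rdev_num ai <= M * pdev p x i ai.
Proof.
move=> M0 rhoM ai; have [pos|] := ltP 0 (pdev p x i ai).
  have rdevM : rdev r p x i ai <= M.
    by rewrite -lee_fin (le_trans _ rhoM) //; apply: le_bigmax_cond.
  by rewrite -(divfK (lt0r_neq0 pos) (rdev_num ai)) -rdevE ler_wpM2r ?pdev_ge0.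
rewrite le_eqVlt ltNge pdev_ge0 orbF => /eqP pdev0.
by rewrite pdev0 mulr0 -pdev0 rdev_num_le_pdev.
Qed.

(* Against x_{-i}, the stage payoff of i's mixed action y is
   sum_ai y(ai) rdev_num(ai) and its absorption probability sum_ai y(ai) pdev(ai). *)
Lemma stationary_stage_le t (M : R) :
  is_strat t -> (forall j, j != i -> forall h, t j h = x j) ->
  (forall ai, rdev_num ai <= M * pdev p x i ai) ->
  \sum_a sprob t [::] a * p a * r i a <= M * \sum_a sprob t [::] a * p a.
Proof.
move=> ht tx numM.
have sprobE a : sprob t [::] a = t i [::] (a i) * \prod_(j | j != i) x j (a j).
  by rewrite /sprob (bigD1 i) //=; congr (_ * _); apply: eq_bigr => j /tx ->.
rewrite (partition_big (I:=prof A) (J:=A i) (fun a : prof A => a i) predT) //=.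
rewrite [X in _ <= _ * X](partition_big (I:=prof A) (J:=A i) (fun a : prof A => a i) predT) //=.
rewrite big_distrr /=; apply: ler_sum => ai _.
have -> : \sum_(a : prof A | true && (a i == ai)) sprob t [::] a * p a * r i a = t i [::] ai * rdev_num ai.
  by rewrite /rdev_num big_distrr /=; apply: eq_bigr => a /eqP <-; rewrite sprobE; ring.
have -> : \sum_(a : prof A | true && (a i == ai)) sprob t [::] a * p a = t i [::] ai * pdev p x i ai.
  by rewrite /pdev big_distrr /=; apply: eq_bigr => a /eqP <-; rewrite sprobE; ring.
by rewrite mulrCA ler_wpM2l //; case: (ht i [::]).
Qed.

Definition best_reply_value s : R :=
  sup [set gamma r p t i | t in
    [set t : strat R A | is_strat t /\ forall j, j != i -> t j = s j]].

Lemma minmaxE :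
  minmax r p i = inf [set v | exists s, is_strat s /\ v = best_reply_value s].
Proof. by []. Qed.

Definition stationary_strat : strat R A := fun j _ => x j.

Lemma is_strat_stationary : is_strat stationary_strat.
Proof. by move=> j h; exact: hx. Qed.

Lemma best_reply_value_ge0 s : is_strat s -> 0 <= best_reply_value s.
Proof.
move=> hs; case/andP: (gamma01 p01 r01 hs) => g0 _.
apply: (le_trans g0); apply: sup_upper_bound; last by exists s.
split; first by exists (gamma r p s i), s.
by exists 1 => _ [t [ht _] <-]; case/andP: (gamma01 p01 r01 ht).
Qed.

Lemma minmax_ge0 : 0 <= minmax r p i.
Proof.
rewrite minmaxE; apply: lb_le_inf.
  by exists (best_reply_value stationary_strat), stationary_strat;
     split => //; exact: is_strat_stationary.
by move=> _ [s [hs ->]]; exact: best_reply_value_ge0.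
Qed.

Lemma minmax_le (M : R) : 0 <= M -> (rho r p x i <= M%:E)%E -> minmax r p i <= M.
Proof.
move=> M0 rhoM; rewrite minmaxE.
have hstat := is_strat_stationary.
apply: (@le_trans _ _ (best_reply_value stationary_strat)).
  apply: ge_inf; last by exists stationary_strat.
  by exists 0 => _ [s [hs ->]]; exact: best_reply_value_ge0.
apply: ge_sup; first by exists (gamma r p stationary_strat i), stationary_strat.
move=> _ [t [ht tx] <-].
suff /andP[] : 0 <= gamma r p t i <= M by [].
apply: gamma_ge0_le => // N.
pose C t := is_strat t /\ forall j, j != i -> forall h, t j h = x j.
apply: (sum_stage_payoff_le p01 (C := C)) => //.
- by move=> s [].
- by move=> s a [hs sx]; split; [exact: is_strat_shift | move=> j /sx + h; apply].
- by move=> s [hs sx]; apply: stationary_stage_le => //; exact: rdev_num_le_scaled.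
- by split => // j /tx ->.
Qed.

End StationaryPunishment.

Theorem mainTheorem4 (R : realType) (I : finType) (A : I -> finType)
    (r : I -> prof A -> R) (p : prof A -> R)
    (hA : forall i, (0 < #|A i|)%N)
    (hr : forall i a, 0 < r i a /\ r i a <= 1)
    (hp : forall a, 0 <= p a /\ p a <= 1)
    (x : mprof R A) (hx : is_mprof x) (hX : pmix p x = 0) (i : I) :
  [/\ ((minmax r p i)%:E <= Order.max 0%E (rho r p x i))%E,
      rho r p x i = (-oo)%E -> minmax r p i = 0
    & rho r p x i != (-oo)%E -> ((minmax r p i)%:E <= rho r p x i)%E].
Proof.
have p01 a : 0 <= p a <= 1 by case: (hp a) => -> ->.
have r01 a : 0 <= r i a <= 1 by case: (hr i a) => /ltW -> ->.
have mm0 := minmax_ge0 p01 r01 hx.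
have [rhoNy | [y y0 rhoy]] := rho_cases p01 r01 hx.
  have mm_le0 : minmax r p i <= 0 by apply: (minmax_le p01 r01 hx); rewrite ?rhoNy ?leNye.
  have mmE : minmax r p i = 0 by apply/le_anti; rewrite mm_le0 mm0.
  by split; rewrite ?rhoNy ?mmE ?eqxx //= maxEle leNye.
have mm_le : minmax r p i <= y by apply: (minmax_le p01 r01 hx); rewrite ?rhoy.
split; rewrite rhoy //.
by rewrite maxEle lee_fin y0 lee_fin.
Qed.
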